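(* Let $(\mathcal{E},[\cdot,\cdot]_{\mathcal{E}})$ be a Leibniz algebra over a field $\mathbb{K}$ and $\omega:\mathcal{E}\otimes\mathcal{E}\to\mathbb{K}$ a bilinear map such that $\mathbb{K}\oplus\mathcal{E}$ with bracket $[(a,x),(b,y)]_\omega=(\omega(x,y),[x,y]_{\mathcal{E}})$ is a Leibniz algebra (a central extension of $\mathcal{E}$ by $\mathbb{K}$). Then $R^{Lei}:(\mathbb{K}\oplus\mathcal{E})^{\otimes2}\to(\mathbb{K}\oplus\mathcal{E})^{\otimes2}$, $R^{Lei}((a,x)\otimes(b,y))=(b,y)\otimes(a,x)+(1,0)\otimes(\omega(x,y),[x,y]_{\mathcal{E}})$, is a solution of the Yang-Baxter equation. Moreover, if $\omega_1,\omega_2$ are two such maps and the central extensions $(\mathbb{K}\oplus\mathcal{E},[\cdot,\cdot]_{\omega_1})$ and $(\mathbb{K}\oplus\mathcal{E},[\cdot,\cdot]_{\omega_2})$ are isomorphic via $\theta$, then the induced solutions $R^{Lei}_1,R^{Lei}_2$ satisfy $(\theta\otimes\theta)R^{Lei}_1=R^{Lei}_2(\theta\otimes\theta)$.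
   Context: A (right) Leibniz algebra is a vector space with bilinear bracket satisfying $[[x,y],z]=[[x,z],y]+[x,[y,z]]$. Isomorphism of central extensions: a Leibniz algebra homomorphism $\theta:(\mathbb{K}\oplus\mathcal{E},[\cdot,\cdot]_{\omega_1})\to(\mathbb{K}\oplus\mathcal{E},[\cdot,\cdot]_{\omega_2})$ with $\theta\circ i=i$ and $p\circ\theta=p$, where $i(a)=(a,0)$ and $p(a,x)=x$. A solution of the Yang-Baxter equation on $V$ is an invertible linear $R:V\otimes V\to V\otimes V$ with $(R\otimes\mathrm{Id})(\mathrm{Id}\otimes R)(R\otimes\mathrm{Id})=(\mathrm{Id}\otimes R)(R\otimes\mathrm{Id})(\mathrm{Id}\otimes R)$. *)

From HB Require Import structures.
From mathcomp Require Import all_boot all_algebra.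
Set Implicit Arguments. Unset Strict Implicit. Unset Printing Implicit Defensive.
Import GRing.Theory.
Local Open Scope ring_scope.

Section Defs.
Variable K : fieldType.

Definition bilinear_map (A B C : lmodType K) (f : A -> B -> C) : Prop :=
  (forall (a : K) x x' y, f (a *: x + x') y = a *: f x y + f x' y) /\
  (forall (a : K) x y y', f x (a *: y + y') = a *: f x y + f x y').

Definition trilinear_map (A B C D : lmodType K) (f : A -> B -> C -> D) : Prop :=
  (forall (a : K) x x' y z, f (a *: x + x') y z = a *: f x y z + f x' y z) /\
  (forall (a : K) x y y' z, f x (a *: y + y') z = a *: f x y z + f x y' z) /\
  (forall (a : K) x y z z', f x y (a *: z + z') = a *: f x y z + f x y z').

Definition leibniz_algebra (L : lmodType K) (br : L -> L -> L) : Prop :=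
  bilinear_map br /\
  forall x y z, br (br x y) z = br (br x z) y + br x (br y z).

Definition ext_space (E : lmodType K) : lmodType K := (K^o * E)%type.

Definition ce_bracket (E : lmodType K) (omega : E -> E -> K^o)
  (br : E -> E -> E) (p q : ext_space E) : ext_space E :=
  ((omega p.2 q.2 : K^o), br p.2 q.2).

(** Tensor powers V(x)V and V(x)V(x)V, modelled as formal sums of pure tensors
    (scalars are absorbed into the first factor), modulo the relation
    "every bilinear (resp. trilinear) map into every K-vector space agrees on
    them" -- i.e. the quotient of the free module by the bilinearity
    relations, which is the tensor product by its universal property. *)
Definition tens2 (V : lmodType K) := seq (V * V)%type.
Definition tens3 (V : lmodType K) := seq (V * V * V)%type.

Definition tens2_eq (V : lmodType K) (s t : tens2 V) : Prop :=
  forall (U : lmodType K) (f : V -> V -> U), bilinear_map f ->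
    \sum_(p <- s) f p.1 p.2 = \sum_(p <- t) f p.1 p.2.

Definition tens3_eq (V : lmodType K) (s t : tens3 V) : Prop :=
  forall (U : lmodType K) (f : V -> V -> V -> U), trilinear_map f ->
    \sum_(p <- s) f p.1.1 p.1.2 p.2 = \sum_(p <- t) f p.1.1 p.1.2 p.2.

Definition scale2 (V : lmodType K) (a : K) (s : tens2 V) : tens2 V :=
  [seq (a *: p.1, p.2) | p <- s].

(** A linear endomorphism of V(x)V is given by its values r u v on pure
    tensors u(x)v, which must be bilinear in (u,v) (modulo tensor equality). *)
Definition tens2_endo (V : lmodType K) (r : V -> V -> tens2 V) : Prop :=
  (forall (a : K) u u' v,
      tens2_eq (r (a *: u + u') v) (scale2 a (r u v) ++ r u' v)) /\
  (forall (a : K) u v v',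
      tens2_eq (r u (a *: v + v')) (scale2 a (r u v) ++ r u v')).

Definition ext2 (V : lmodType K) (r : V -> V -> tens2 V) (s : tens2 V) : tens2 V :=
  flatten [seq r p.1 p.2 | p <- s].

Definition lift12 (V : lmodType K) (r : V -> V -> tens2 V) (s : tens3 V) : tens3 V :=
  flatten [seq [seq (q.1, q.2, p.2) | q <- r p.1.1 p.1.2] | p <- s].

Definition lift23 (V : lmodType K) (r : V -> V -> tens2 V) (s : tens3 V) : tens3 V :=
  flatten [seq [seq (p.1.1, q.1, q.2) | q <- r p.1.2 p.2] | p <- s].

Definition YBE_solution (V : lmodType K) (r : V -> V -> tens2 V) : Prop :=
  tens2_endo r /\
  (exists r' : V -> V -> tens2 V, tens2_endo r' /\
     forall u v, tens2_eq (ext2 r' (r u v)) [:: (u, v)] /\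
                 tens2_eq (ext2 r (r' u v)) [:: (u, v)]) /\
  (forall s : tens3 V,
     tens3_eq (lift12 r (lift23 r (lift12 r s)))
              (lift23 r (lift12 r (lift23 r s)))).

Definition RLei (E : lmodType K) (omega : E -> E -> K^o) (br : E -> E -> E)
  (p q : ext_space E) : tens2 (ext_space E) :=
  [:: (q, p); (((1 : K^o), (0 : E)) : ext_space E, ce_bracket omega br p q)].

(** Isomorphism of central extensions: a Leibniz algebra homomorphism
    theta with theta o i = i and p o theta = p. *)
Definition ce_iso (E : lmodType K) (br : E -> E -> E) (omega1 omega2 : E -> E -> K^o)
  (theta : ext_space E -> ext_space E) : Prop :=
  (forall (a : K) x y, theta (a *: x + y) = a *: theta x + theta y) /\
  (forall x y, theta (ce_bracket omega1 br x y) =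
               ce_bracket omega2 br (theta x) (theta y)) /\
  (forall a : K, theta ((a : K^o), (0 : E)) = ((a : K^o), (0 : E))) /\
  (forall x, (theta x).2 = x.2).

Definition map2 (V : lmodType K) (theta : V -> V) (s : tens2 V) : tens2 V :=
  [seq (theta p.1, theta p.2) | p <- s].

End Defs.

(** The element [c = (1, 0)] is central in [K (+) E], so [R(u (x) v) = v (x) u + c (x) [u, v]]
    is the flip perturbed by a term that every further application of [R] either flips
    or kills.  Expanding both sides of the braid relation on [u (x) v (x) w], all terms
    agree except [c (x) c (x) [[u,v],w]] against
    [c (x) c (x) [[u,w],v] + c (x) c (x) [u,[v,w]]], which is the Leibniz identity.
    The inverse is [u (x) v |-> v (x) u - [v, u] (x) c].  An isomorphism [theta] of
    central extensions preserves brackets and fixes [c], so [theta (x) theta]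
    intertwines the two solutions already on pure tensors. *)
From HB Require Import structures.
From mathcomp Require Import all_boot all_algebra.
Set Implicit Arguments.
Unset Strict Implicit.
Unset Printing Implicit Defensive.
Import GRing.Theory.
Local Open Scope ring_scope.

Section LeibnizBraiding.
Variable K : fieldType.

Section Bilinear.
Context {A B C : lmodType K} {f : A -> B -> C} (f_bil : bilinear_map f).

Lemma bilin0l y : f 0 y = 0.
Proof.
have := f_bil.1 1 0 0 y; rewrite !scale1r addr0 => f0_dbl.
by apply: (addrI (f 0 y)); rewrite -f0_dbl addr0.
Qed.

Lemma bilin0r x : f x 0 = 0.
Proof.
have := f_bil.2 1 x 0 0; rewrite !scale1r addr0 => f0_dbl.
by apply: (addrI (f x 0)); rewrite -f0_dbl addr0.
Qed.

Lemma bilinDl x x' y : f (x + x') y = f x y + f x' y.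
Proof. by rewrite -[x]scale1r f_bil.1 !scale1r. Qed.

Lemma bilinDr x y y' : f x (y + y') = f x y + f x y'.
Proof. by rewrite -[y]scale1r f_bil.2 !scale1r. Qed.

Lemma bilinZl a x y : f (a *: x) y = a *: f x y.
Proof. by rewrite -[a *: x]addr0 f_bil.1 bilin0l addr0. Qed.

Lemma bilinZr a x y : f x (a *: y) = a *: f x y.
Proof. by rewrite -[a *: y]addr0 f_bil.2 bilin0r addr0. Qed.

Lemma bilinNl x y : f (- x) y = - f x y.
Proof. by rewrite -scaleN1r bilinZl scaleN1r. Qed.

Lemma bilinNr x y : f x (- y) = - f x y.
Proof. by rewrite -scaleN1r bilinZr scaleN1r. Qed.

End Bilinear.

Lemma trilinear_bilinear23 {A B C D : lmodType K} {f : A -> B -> C -> D} :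
  trilinear_map f -> forall x, bilinear_map (f x).
Proof. by move=> [_ [f2 f3]] x; split=> a *; [exact: f2 | exact: f3]. Qed.

Section Tensors.
Variable V : lmodType K.
Implicit Types (r : V -> V -> tens2 V) (s : tens3 V).

Lemma lift12_cat r s1 s2 : lift12 r (s1 ++ s2) = lift12 r s1 ++ lift12 r s2.
Proof. by rewrite /lift12 map_cat flatten_cat. Qed.

Lemma lift23_cat r s1 s2 : lift23 r (s1 ++ s2) = lift23 r s1 ++ lift23 r s2.
Proof. by rewrite /lift23 map_cat flatten_cat. Qed.

Lemma braid_pure r :
  (forall u v w, tens3_eq (lift12 r (lift23 r (lift12 r [:: (u, v, w)])))
                          (lift23 r (lift12 r (lift23 r [:: (u, v, w)])))) ->
  forall s, tens3_eq (lift12 r (lift23 r (lift12 r s)))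
                     (lift23 r (lift12 r (lift23 r s))).
Proof.
move=> braid_uvw s U f f_tri; elim: s => [//|[[u v] w] s IHs].
rewrite -cat1s; move: [:: _] (braid_uvw u v w U f f_tri) => t braid_t.
by rewrite !(lift12_cat, lift23_cat) !big_cat IHs braid_t.
Qed.

Lemma map2_ext2 (theta : V -> V) r1 r2 :
  (forall p q, map2 theta (r1 p q) = r2 (theta p) (theta q)) ->
  forall s : tens2 V, map2 theta (ext2 r1 s) = ext2 r2 (map2 theta s).
Proof.
move=> r12 s; elim: s => [//|[p q] s IHs].
by rewrite /map2 /ext2 /= map_cat -r12; congr (_ ++ _).
Qed.

End Tensors.

Section Braiding.
Variables (V : lmodType K) (br : V -> V -> V) (c : V).
Hypotheses (br_bil : bilinear_map br)
           (br_leibniz : forall x y z, br (br x y) z = br (br x z) y + br x (br y z))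
           (c_centrall : forall x, br c x = 0) (c_centralr : forall x, br x c = 0).

Definition central_braiding (p q : V) : tens2 V := [:: (q, p); (c, br p q)].

Definition central_braiding_inv (p q : V) : tens2 V := [:: (q, p); (- br q p, c)].

Lemma central_braiding_endo : tens2_endo central_braiding.
Proof.
split=> a u u' v U f f_bil; rewrite big_cat /= !big_cons !big_nil !addr0 /=.
- rewrite (bilinDr f_bil) (bilinZr f_bil) (bilinDl br_bil) (bilinZl br_bil).
  by rewrite (bilinDr f_bil) (bilinZr f_bil) !(bilinZl f_bil) addrACA.
- rewrite (bilinDl f_bil) (bilinDr br_bil) (bilinZr br_bil).
  by rewrite (bilinDr f_bil) (bilinZr f_bil) !(bilinZl f_bil) addrACA.
Qed.

Lemma central_braiding_inv_endo : tens2_endo central_braiding_inv.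
Proof.
split=> a u u' v U f f_bil; rewrite big_cat /= !big_cons !big_nil !addr0 /=.
- rewrite (bilinDr f_bil) (bilinZr f_bil) (bilinDr br_bil) (bilinZr br_bil).
  by rewrite opprD (bilinDl f_bil) -scalerN !(bilinZl f_bil) addrACA.
- rewrite (bilinDl f_bil) (bilinZl f_bil) (bilinDl br_bil) (bilinZl br_bil).
  by rewrite opprD (bilinDl f_bil) -scalerN !(bilinZl f_bil) addrACA.
Qed.

Lemma central_braidingK u v :
  tens2_eq (ext2 central_braiding_inv (central_braiding u v)) [:: (u, v)].
Proof.
move=> U f f_bil; rewrite /ext2 /= !big_cons !big_nil /= c_centralr oppr0.
by rewrite (bilin0l f_bil) (bilinNl f_bil) !addr0 addNr addr0.
Qed.

Lemma central_braiding_invK u v :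
  tens2_eq (ext2 central_braiding (central_braiding_inv u v)) [:: (u, v)].
Proof.
move=> U f f_bil; rewrite /ext2 /= !big_cons !big_nil /= c_centralr.
by rewrite (bilin0r f_bil) (bilinNr f_bil) !addr0 addrN addr0.
Qed.

Lemma central_braiding_braid u v w :
  tens3_eq (lift12 central_braiding (lift23 central_braiding
             (lift12 central_braiding [:: (u, v, w)])))
           (lift23 central_braiding (lift12 central_braiding
             (lift23 central_braiding [:: (u, v, w)]))).
Proof.
move=> U f f_tri; have f_bil23 := trilinear_bilinear23 f_tri.
rewrite /= !big_cons !big_nil /= !c_centrall !c_centralr (bilin0l br_bil).
rewrite !(bilin0l (f_bil23 _)) !(bilin0r (f_bil23 _)) !add0r !addr0.
rewrite br_leibniz (bilinDr (f_bil23 _)).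
by rewrite !addrA [LHS](ACl (1*4*3*5*2*6)).
Qed.

Lemma central_braiding_YBE : YBE_solution central_braiding.
Proof.
split; [exact: central_braiding_endo | split].
- exists central_braiding_inv; split; first exact: central_braiding_inv_endo.
  by move=> u v; split; [exact: central_braidingK | exact: central_braiding_invK].
- exact: braid_pure central_braiding_braid.
Qed.

End Braiding.

Section CentralExtension.
Variables (E : lmodType K) (br : E -> E -> E).

Definition ext_unit : ext_space E := ((1 : K^o), (0 : E)).

Lemma RLeiE (omega : E -> E -> K^o) :
  RLei omega br = central_braiding (ce_bracket omega br) ext_unit.
Proof. by []. Qed.

Section Bracket.
Variable omega : E -> E -> K^o.
Hypotheses (omega_bil : bilinear_map omega) (br_bil : bilinear_map br).

Lemma ce_bracket_ker_projl p q : p.2 = 0 -> ce_bracket omega br p q = 0.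
Proof.
by rewrite /ce_bracket => ->; rewrite (bilin0l omega_bil) (bilin0l br_bil).
Qed.

Lemma ce_bracket_ker_projr p q : q.2 = 0 -> ce_bracket omega br p q = 0.
Proof.
by rewrite /ce_bracket => ->; rewrite (bilin0r omega_bil) (bilin0r br_bil).
Qed.

Lemma RLei_YBE :
  leibniz_algebra (ce_bracket omega br) -> YBE_solution (RLei omega br).
Proof.
move=> [B_bil B_leibniz]; rewrite RLeiE.
by apply: central_braiding_YBE B_bil B_leibniz _ _ => p;
  [exact: ce_bracket_ker_projl | exact: ce_bracket_ker_projr].
Qed.

End Bracket.

Lemma ce_iso_RLei (omega1 omega2 : E -> E -> K^o) theta :
  ce_iso br omega1 omega2 theta -> forall p q,
  map2 theta (RLei omega1 br p q) = RLei omega2 br (theta p) (theta q).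
Proof.
by move=> [_ [theta_br [theta_unit _]]] p q; rewrite /map2 /= theta_br theta_unit.
Qed.

End CentralExtension.

End LeibnizBraiding.

Theorem theorem5p1 (K : fieldType) (E : lmodType K) (br : E -> E -> E) :
  leibniz_algebra br ->
  (forall omega : E -> E -> K^o,
     bilinear_map omega ->
     leibniz_algebra (ce_bracket omega br) ->
     YBE_solution (RLei omega br)) /\
  (forall omega1 omega2 : E -> E -> K^o,
     bilinear_map omega1 -> bilinear_map omega2 ->
     leibniz_algebra (ce_bracket omega1 br) ->
     leibniz_algebra (ce_bracket omega2 br) ->
     forall theta : ext_space E -> ext_space E,
       ce_iso br omega1 omega2 theta ->
       forall s : tens2 (ext_space E),
         tens2_eq (map2 theta (ext2 (RLei omega1 br) s))
                  (ext2 (RLei omega2 br) (map2 theta s))).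
Proof.
move=> [br_bil _].
split=> [omega omega_bil | omega1 omega2 _ _ _ _ theta theta_iso s].
- exact: RLei_YBE.
- by rewrite (map2_ext2 (ce_iso_RLei theta_iso)).
Qed.
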